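(* Let $\mathcal{A}=\{\mathbf{A},\mathbf{B},\mathbf{C},\mathbf{D}\}$, let $\mathcal{R}^\dagger$ be the symmetric relation on $\mathcal{A}$ whose related pairs are exactly $\{\mathbf{A},\mathbf{B}\}$, $\{\mathbf{B},\mathbf{D}\}$, $\{\mathbf{D},\mathbf{C}\}$, and let $\mathcal{H}$ be the base graph on $\{1,\dots,n\}$ defined as follows: if $n$ is even, $\mathcal{H}$ has edges $\{\sigma(i),\sigma(i+1)\}$, $i=1,\dots,n$ (indices modulo $n$), for some permutation $\sigma$ of $\{1,\dots,n\}$; if $n$ is odd, for a fixed vertex $u$ and a bijection $\sigma$ from $\{1,\dots,n-1\}$ onto $\{1,\dots,n\}\setminus\{u\}$, $\mathcal{H}$ has edges $\{\sigma(i),\sigma(i+1)\}$, $i=1,\dots,n-1$ (indices modulo $n-1$), and $u$ is isolated. Let $\mu_\pm=\frac{1\pm\sqrt5}{2}$. Then there exist at least $(\sqrt2)^{n-1}$ shapes $S$ such that the preimage $P_S=\{v\in\mathcal{A}^n:\mathcal{H}_{\mathcal{R}^\dagger}(v)=S\}$ satisfies: (I) the subgraph of $Q_4^n$ induced by $P_S$ has a connected component with at least $\mu_+^n+\mu_-^n$ vertices; (II) $P_S$ has diameter $n$, i.e. there exist $v,v'\in P_S$ which differ in all $n$ coordinates.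
   Context: $Q_4^n$ is the graph on $\mathcal{A}^n$ in which two sequences are adjacent iff they differ in exactly one coordinate. For $v=(x_1,\dots,x_n)\in\mathcal{A}^n$, its shape $\mathcal{H}_{\mathcal{R}^\dagger}(v)$ is the graph with vertex set $\{1,\dots,n\}$ and edge set $\{\{i,k\}\in E_{\mathcal{H}}:(x_i,x_k)\in\mathcal{R}^\dagger\}$; a shape is any graph of this form. *)

From HB Require Import structures.
From mathcomp Require Import all_boot all_order all_algebra.
From mathcomp Require Import fingroup perm.
Set Implicit Arguments. Unset Strict Implicit. Unset Printing Implicit Defensive.
Import Order.TTheory GRing.Theory Num.Theory.

(* Alphabet A = {A,B,C,D} encoded as 'I_4 : A = 0, B = 1, C = 2, D = 3. *)
Definition letter := 'I_4.

Definition Rdag (x y : letter) : bool :=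
  let a := nat_of_ord x in let b := nat_of_ord y in
  [|| (a == 0) && (b == 1), (a == 1) && (b == 0),
      (a == 1) && (b == 3), (a == 3) && (b == 1),
      (a == 3) && (b == 2) | (a == 2) && (b == 3)]%N.

Definition cyc_len (n : nat) : nat := if odd n then n.-1 else n.

(* For n odd, u = sigma (n-1) is the isolated vertex, and sigma restricted to
   {0..n-2} is a bijection onto the complement of u. *)
Definition Hedges (n : nat) (sigma : {perm 'I_n}) : {set {set 'I_n}} :=
  [set e : {set 'I_n} | [exists i : 'I_n, exists j : 'I_n,
     [&& (i < cyc_len n)%N, (nat_of_ord j == (i.+1 %% cyc_len n))%N &
         e == [set sigma i; sigma j]]]].

Definition word n := {ffun 'I_n -> letter}.

Definition shape n (sigma : {perm 'I_n}) (v : word n) : {set {set 'I_n}} :=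
  [set e in Hedges sigma |
     [exists i : 'I_n, exists k : 'I_n, (e == [set i; k]) && Rdag (v i) (v k)]].

Definition is_shape n (sigma : {perm 'I_n}) (S : {set {set 'I_n}}) : bool :=
  [exists v : word n, shape sigma v == S].

Definition shape_preimage n (sigma : {perm 'I_n}) (S : {set {set 'I_n}}) : {set word n} :=
  [set v : word n | shape sigma v == S].

Definition Qadj n (v w : word n) : bool := #|[set i | v i != w i]| == 1%N.

Definition induced n (P : {set word n}) : rel (word n) :=
  fun v w => [&& v \in P, w \in P & Qadj v w].

Definition component n (P : {set word n}) (v : word n) : {set word n} :=
  [set w | connect (induced P) v w].

Definition mu_plus (R : rcfType) : R := (1 + Num.sqrt 5) / 2.
Definition mu_minus (R : rcfType) : R := (1 - Num.sqrt 5) / 2.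

From HB Require Import structures.
From mathcomp Require Import all_boot all_order all_algebra.
From mathcomp Require Import fingroup perm.
From mathcomp Require Import zify ring.
Import Order.TTheory GRing.Theory Num.Theory.
Set Implicit Arguments. Unset Strict Implicit. Unset Printing Implicit Defensive.

(* Number the vertices of the cycle of H as 0, ..., m-1 and pair
   them as (2l, 2l+1).  A letter is described by its side in the bipartite path
   A - B - D - C and by whether it is a leaf (A or C) of that path; two letters
   are related iff they lie on opposite sides and are not both leaves.  Choosing
   freely, for each pair, whether the side changes inside the pair (and keeping
   it constant between pairs) gives floor(n/2) independent edges of the shape,
   hence 2^floor(n/2) >= sqrt2^(n-1) shapes.  In the preimage of such a shape, the
   word using no leaves is connected to every word obtained by turning on a set
   of leaves containing no two endpoints of a side-changing edge, since leaves
   can be switched on one at a time; at most one leaf per pair, with a guard on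
   the wrap-around edge, already gives at least mu_+^n + mu_-^n, the n-th Lucas
   number, such words.  Finally, moving every letter to the other side and
   swapping leaves with non-leaves keeps the shape and changes every coordinate. *)

(* The path A - B - D - C of R^dagger is bipartite with sides {A, D}
   (false) and {B, C} (true); its leaves are A and C. *)
Definition sided_letter (side leaf : bool) : letter :=
  @Ordinal 4 (if side then (if leaf then 2 else 1) else (if leaf then 0 else 3))
    ltac:(by case: side; case: leaf).

Lemma Rdag_sym x y : Rdag x y = Rdag y x.
Proof. by case: x y => [[|[|[|[|x]]]] hx] [[|[|[|[|y]]]] hy]. Qed.

Lemma Rdag_irr x : Rdag x x = false.
Proof. by case: x => [[|[|[|[|x]]]] hx]. Qed.

Lemma Rdag_sided s1 l1 s2 l2 :
  Rdag (sided_letter s1 l1) (sided_letter s2 l2) = (s1 != s2) && ~~ (l1 && l2).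
Proof. by case: s1 l1 s2 l2 => [] [] [] []. Qed.

Lemma sided_letter_inj s l1 l2 : (sided_letter s l1 == sided_letter s l2) = (l1 == l2).
Proof. by case: s l1 l2 => [] [] []. Qed.

Lemma sided_letter_side_neq s l1 l2 : sided_letter s l1 != sided_letter (~~ s) l2.
Proof. by case: s l1 l2 => [] [] []. Qed.

Lemma Rdag_on_edge n (w : word n) (x y : 'I_n) :
  [exists i, exists k, ([set x; y] == [set i; k]) && Rdag (w i) (w k)] = Rdag (w x) (w y).
Proof.
apply/existsP/idP => [[i /existsP [k /andP [/eqP exy wik]]]|wxy]; last first.
  by exists x; apply/existsP; exists y; rewrite eqxx.
have : i \in [set x; y] by rewrite exy set21.
have : k \in [set x; y] by rewrite exy set22.
rewrite !inE => /orP [] /eqP ek /orP [] /eqP ei; move: wik;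
  by rewrite ek ei ?Rdag_irr // Rdag_sym.
Qed.

Lemma cyc_len_le n : (cyc_len n <= n)%N.
Proof. by rewrite /cyc_len; case: odd => //; exact: leq_pred. Qed.

Lemma cyc_lenE n : cyc_len n = (n./2).*2.
Proof.
rewrite /cyc_len; have := odd_double_half n.
case: odd => /= def_n; rewrite -[in LHS]def_n //.
Qed.

Section CycleWords.

Variables (n : nat) (sigma : {perm 'I_n}).

(* [sigma i] is the i-th vertex of the cycle of H. *)
Definition cycle_word (F : nat -> letter) : word n := [ffun y => F ((sigma^-1)%g y)].

Lemma cycle_wordE F i : cycle_word F (sigma i) = F i.
Proof. by rewrite ffunE permK. Qed.

Lemma eq_cycle_word F1 F2 :
  (forall i, (i < n)%N -> F1 i = F2 i) -> cycle_word F1 = cycle_word F2.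
Proof. by move=> eqF; apply/ffunP => y; rewrite !ffunE eqF. Qed.

Lemma Qadj_cycle_word F1 F2 j (ltjn : (j < n)%N) : F1 j != F2 j ->
  (forall i, (i < n)%N -> i != j -> F1 i = F2 i) -> Qadj (cycle_word F1) (cycle_word F2).
Proof.
move=> neqF eqF; rewrite /Qadj (_ : [set y | _] = [set sigma (Ordinal ltjn)]) ?cards1 //.
apply/setP => y; rewrite !inE; have [z ->] : exists z, y = sigma z.
  by exists ((sigma^-1)%g y); rewrite permKV.
rewrite !cycle_wordE (inj_eq perm_inj).
have [->|nzj] := eqVneq z (Ordinal ltjn); first exact: neqF.
by rewrite (eqF z) ?eqxx.
Qed.

Lemma eq_shape_cycle_word F1 F2 :
  (forall i, (i < cyc_len n)%N -> Rdag (F1 i) (F1 (i.+1 %% cyc_len n))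
                                = Rdag (F2 i) (F2 (i.+1 %% cyc_len n))) ->
  shape sigma (cycle_word F1) = shape sigma (cycle_word F2).
Proof.
move=> eqR; apply/setP => e; rewrite !inE; apply: andb_id2l.
case/existsP => i /existsP [j /and3P [lti /eqP ej /eqP ->]].
by rewrite !Rdag_on_edge !cycle_wordE ej eqR.
Qed.

End CycleWords.

Lemma mem_shape_cycle_word n (sigma : {perm 'I_n.+1}) F i :
  (i.+1 < cyc_len n.+1)%N ->
  ([set sigma (inord i); sigma (inord i.+1)] \in shape sigma (cycle_word sigma F))
   = Rdag (F i) (F i.+1).
Proof.
move=> lti; have := cyc_len_le n.+1 => lecn.
have [lt1 lt2] : (i < n.+1)%N /\ (i.+1 < n.+1)%N by lia.
rewrite inE Rdag_on_edge !cycle_wordE !inordK //.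
suff -> : [set sigma (inord i); sigma (inord i.+1)] \in Hedges sigma by [].
rewrite inE; apply/existsP; exists (inord i); apply/existsP; exists (inord i.+1).
by rewrite !inordK // eqxx modn_small // eqxx andbT; lia.
Qed.

(* The side flips across the edge (2l, 2l+1) exactly when g l, and never across
   (2l+1, 2l+2). *)
Fixpoint cycle_side (g : nat -> bool) (i : nat) : bool :=
  if i is i'.+1 then (if odd i' then cycle_side g i' else cycle_side g i' (+) g i'./2)
  else false.

Lemma cycle_side_double g l : cycle_side g (l.*2).+1 = cycle_side g l.*2 (+) g l.
Proof. by rewrite /= odd_double doubleK. Qed.

Lemma cycle_side_odd g i : odd i -> cycle_side g i.+1 = cycle_side g i.
Proof. by move=> /= ->. Qed.

(* A pattern chooses, for each pair of positions (2o, 2o+1) with o < k, no leaf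
   (code 0), a leaf at 2o (code 1) or a leaf at 2o+1 (code 2); when r holds it
   also chooses whether position 2k is a leaf. *)
Definition leaf_pattern (k : nat) (r : bool) := ({ffun 'I_k -> 'I_3} * 'I_r.+1)%type.

Section LeafPatterns.

Variables (k : nat) (r : bool).
Implicit Type x : leaf_pattern k r.

Definition leaf_bit x (i : nat) : bool :=
  if (insub i./2 : option 'I_k) is Some o then val (x.1 o) == (odd i).+1
  else val x.2 == 1%N.

Lemma leaf_bit_pair x (o : 'I_k) (b : bool) :
  leaf_bit x (b + o.*2) = (val (x.1 o) == b.+1).
Proof. by rewrite /leaf_bit half_bit_double valK oddD odd_double addbF oddb. Qed.

Lemma leaf_bit_even x (o : 'I_k) : leaf_bit x o.*2 = (val (x.1 o) == 1%N).
Proof. exact: (leaf_bit_pair x o false). Qed.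

Lemma leaf_bit_odd x (o : 'I_k) : leaf_bit x o.*2.+1 = (val (x.1 o) == 2).
Proof. exact: (leaf_bit_pair x o true). Qed.

Lemma leaf_bit_last x : leaf_bit x k.*2 = (val x.2 == 1%N).
Proof. by rewrite /leaf_bit doubleK insubF // ltnn. Qed.

Lemma leaf_bit_inj x y :
  (forall i, (i < k.*2 + r)%N -> leaf_bit x i = leaf_bit y i) -> x = y.
Proof.
case: x y => [f1 i1] [f2 i2] eq_bit; congr (_, _).
  apply/ffunP => o; have lto := ltn_ord o.
  have := eq_bit o.*2; have := eq_bit o.*2.+1.
  rewrite !leaf_bit_even !leaf_bit_odd; rewrite -!muln2 in eq_bit *.
  move=> /(_ ltac:(lia)) e2 /(_ ltac:(lia)) e1; apply: val_inj; move: e1 e2 => /=.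
  by case: (f1 o) => [[|[|[|a]]] ?]; case: (f2 o) => [[|[|[|b]]] ?].
have := eq_bit k.*2; rewrite !leaf_bit_last /= => {eq_bit} eq_last.
apply: val_inj; move: i1 i2 eq_last.
by case: r => [] [[|[|?]] ?] [[|[|?]] ?] //=; rewrite addn1 ltnSn => /(_ isT).
Qed.

Definition wrap_conflict := [set x | leaf_bit x (k.*2).-1 && leaf_bit x 0].

End LeafPatterns.

Lemma card_leaf_pattern k r : #|{: leaf_pattern k r}| = (3 ^ k * r.+1)%N.
Proof. by rewrite card_prod card_ffun !card_ord. Qed.

(* A conflict fixes the codes of the first and the last pair. *)
Lemma card_wrap_conflict k r : (#|wrap_conflict k.+2 r| <= 3 ^ k * r.+1)%N.
Proof.
pose drop_ends (x : leaf_pattern k.+2 r) : leaf_pattern k r :=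
  ([ffun j : 'I_k => x.1 (inord j.+1)], x.2).
rewrite -card_leaf_pattern; apply: (@leq_card_in _ _ drop_ends).
move=> [g1 i1] [g2 i2]; rewrite !inE => + + [eqg ->].
have -> : (k.+2).*2.-1 = (@ord_max k.+1).*2.+1 by rewrite /= !doubleS.
rewrite -[0%N]/((@ord0 k.+1).*2) !leaf_bit_odd !leaf_bit_even /=.
move=> /andP [/eqP l1 /eqP f1] /andP [/eqP l2 /eqP f2]; congr (_, _); apply/ffunP => o.
have [o0|o_gt0] := posnP o.
  have -> : o = ord0 by apply: val_inj.
  by apply: val_inj => /=; rewrite f1 f2.
have [o_lt|o_ge] := ltnP o k.+1.
  have lt_pred : (o.-1 < k)%N by rewrite -ltnS prednK.
  have := congr1 (fun f : {ffun 'I_k -> 'I_3} => f (Ordinal lt_pred)) eqg.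
  rewrite !ffunE /=.
  by rewrite (_ : inord o.-1.+1 = o) //; apply: val_inj; rewrite /= inordK; lia.
have -> : o = ord_max by apply: val_inj => /=; have := ltn_ord o; lia.
by apply: val_inj => /=; rewrite l1 l2.
Qed.

Fixpoint lucas (n : nat) : nat :=
  if n is n'.+1 then (if n' is n''.+1 then lucas n' + lucas n'' else 1) else 2.

Lemma lucasSS n : lucas n.+2 = (lucas n.+1 + lucas n)%N.
Proof. by []. Qed.

Lemma lucas_double_le k :
  (lucas (k.+2).*2 <= 8 * 3 ^ k /\ lucas (k.+2).*2.+1 <= 16 * 3 ^ k)%N.
Proof.
elim: k => [//|k IHk]; rewrite [k.+3.*2]doubleS; move: IHk; set m := k.+2.*2.
by rewrite (lucasSS m.+1) (lucasSS m) expnS; lia.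
Qed.

(* There are at least 8 * 3^(k-2) conflict-free patterns, while lucas grows
   slower than sqrt3^n. *)
Lemma lucas_le_card_wrap_free k (r : bool) : (0 < k.*2 + r)%N ->
  (lucas (k.*2 + r) <= #|~: wrap_conflict k r|)%N.
Proof.
have := cardsC (wrap_conflict k r); rewrite card_leaf_pattern.
case: k => [|[|k]] card_split pos.
- case: r card_split pos => // _ _; apply/card_gt0P; exists ([ffun => ord0], ord0).
  by rewrite !inE /leaf_bit /= insubF.
- have no_conflict : wrap_conflict 1 r = set0.
    apply/setP => x; rewrite !inE -[(1.*2).-1]/((@ord0 0).*2.+1) -[0%N]/((@ord0 0).*2).
    by rewrite leaf_bit_odd leaf_bit_even; case: eqP => // ->.
  move: card_split; rewrite no_conflict cards0 add0n => ->.
  by case: r {pos no_conflict}.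
- have := card_wrap_conflict k r; have [lk1 lk2] := lucas_double_le k.
  by move: card_split; rewrite !expnS; case: r {pos}; rewrite [nat_of_bool _]/= ?addn0 ?addn1; lia.
Qed.

Definition leaf_compatible n (T B : nat -> bool) :=
  forall i, (i < cyc_len n)%N -> T i != T (i.+1 %% cyc_len n) ->
    ~~ (B i && B (i.+1 %% cyc_len n)).

Lemma leaf_compatible_sub n T (B B' : nat -> bool) :
  leaf_compatible n T B -> subpred B' B -> leaf_compatible n T B'.
Proof.
move=> compat subB i lti neqT; apply/negP => /andP [/subB Bi /subB Bi'].
by move: (compat i lti neqT); rewrite Bi Bi'.
Qed.

(* Inside a pair the leaves are exclusive, consecutive pairs lie on the same
   side, and the wrap-around edge is guarded by the absence of a conflict. *)
Lemma leaf_compatible_pattern n g (x : leaf_pattern n./2 (odd n)) :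
  x \in ~: wrap_conflict n./2 (odd n) -> leaf_compatible n (cycle_side g) (leaf_bit x).
Proof.
rewrite !inE => no_conflict; rewrite /leaf_compatible cyc_lenE => i lti.
have [lti1|] := ltnP i.+1 (n./2).*2; last first.
  move=> le_i1; have def_i1 : i.+1 = (n./2).*2 by apply/eqP; rewrite eqn_leq lti.
  have def_i : i = (n./2).*2.-1 by rewrite -def_i1.
  by rewrite def_i1 modnn def_i => _.
rewrite modn_small //; case odd_i: (odd i); first by rewrite cycle_side_odd // eqxx.
have def_i : i = (i./2).*2 by rewrite -[LHS]odd_double_half odd_i.
have lt_half : (i./2 < n./2)%N by rewrite -ltn_double -def_i.
rewrite def_i -[(i./2).*2]/(nat_of_ord (Ordinal lt_half)).*2 leaf_bit_even leaf_bit_odd.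
by move=> _; case: eqP => // ->.
Qed.

Section SidedWords.

Variables (n : nat) (sigma : {perm 'I_n}).

Definition sided_word (T B : nat -> bool) : word n :=
  cycle_word sigma (fun i => sided_letter (T i) (B i)).

Lemma shape_sided_word T B : leaf_compatible n T B ->
  shape sigma (sided_word T B) = shape sigma (sided_word T (fun=> false)).
Proof.
move=> compat; apply: eq_shape_cycle_word => i lti; rewrite !Rdag_sided andbF.
by case: eqVneq => //= neqT; apply: compat.
Qed.

Lemma sided_word_in_component T B : leaf_compatible n T B ->
  sided_word T B \in component (shape_preimage sigma
                        (shape sigma (sided_word T (fun=> false)))) (sided_word T (fun=> false)).
Proof.
move=> compat; set P := shape_preimage _ _.
have inP B' : subpred B' B -> sided_word T B' \in P.
  by move=> subB; rewrite inE shape_sided_word //; apply: leaf_compatible_sub subB.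
pose prefix j i := B i && (i < j)%N.
have sub_prefix j : subpred (prefix j) B by move=> i /andP [].
suff conn j : connect (induced P) (sided_word T (fun=> false)) (sided_word T (prefix j)).
  rewrite inE (_ : sided_word T B = sided_word T (prefix n)); first exact: conn.
  by apply: eq_cycle_word => i lt_in; rewrite /prefix lt_in andbT.
elim: j => [|j IHj].
  suff -> : sided_word T (prefix 0) = sided_word T (fun=> false) by exact: connect0.
  by apply: eq_cycle_word => i _; rewrite /prefix andbF.
apply: (connect_trans IHj).
have [/andP [Bj ltjn]|notBj] := boolP (B j && (j < n)%N).
  apply: connect1; rewrite /induced !inP //=.
  apply: (Qadj_cycle_word sigma ltjn) => [|i _ nij].
    by rewrite sided_letter_inj /prefix ltnn ltnSn Bj.
  by rewrite /prefix ltnS [i <= j]leq_eqVlt (negPf nij).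
suff -> : sided_word T (prefix j.+1) = sided_word T (prefix j) by exact: connect0.
apply: eq_cycle_word => i lt_in; rewrite /prefix ltnS [i <= j]leq_eqVlt.
have [eij|//] := eqVneq i j.
by move: notBj; rewrite -eij lt_in andbT => /negPf ->.
Qed.

End SidedWords.

Section ShapeFamily.

Variables (n : nat) (sigma : {perm 'I_n.+1}).
Local Notation k := (n.+1)./2.

Definition base_word (t : k.-tuple bool) : word n.+1 :=
  sided_word sigma (cycle_side (nth false t)) (fun=> false).

Definition antipodal_word (t : k.-tuple bool) : word n.+1 :=
  cycle_word sigma (fun i => sided_letter (~~ cycle_side (nth false t) i)
                                          (~~ cycle_side (nth false t) i)).

Lemma mem_shape_base_word t (o : 'I_k) :
  [set sigma (inord o.*2); sigma (inord o.*2.+1)] \in shape sigma (base_word t) = tnth t o.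
Proof.
rewrite mem_shape_cycle_word; last by rewrite cyc_lenE ltn_Sdouble.
by rewrite Rdag_sided cycle_side_double -tnth_nth; case: (cycle_side _ _); case: (tnth t o).
Qed.

Lemma card_shape_family (R : rcfType) :
  (Num.sqrt (2 : R) ^+ n <= #|[set shape sigma (base_word t) | t : k.-tuple bool]|%:R)%R.
Proof.
rewrite card_imset; last first.
  by move=> t1 t2 eq_shape; apply: eq_from_tnth => o; rewrite -!mem_shape_base_word eq_shape.
rewrite card_tuple card_bool natrX.
have le_n : (n <= k.*2)%N by have := odd_double_half n.+1; case: odd => /=; lia.
apply: (le_trans (ler_weXn2l _ le_n)); first by rewrite -{1}sqrtr1 ler_sqrt ?ler1n.
by rewrite -mul2n exprM sqr_sqrtr ?ler0n.
Qed.

Lemma lucas_le_card_component t :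
  (lucas n.+1 <= #|component (shape_preimage sigma (shape sigma (base_word t))) (base_word t)|)%N.
Proof.
have def_n : ((n.+1)./2.*2 + odd n.+1 = n.+1)%N by rewrite addnC odd_double_half.
rewrite -[in lucas _]def_n; apply: leq_trans (lucas_le_card_wrap_free _) _; first by rewrite def_n.
pose leaf_word (x : leaf_pattern k (odd n.+1)) :=
  sided_word sigma (cycle_side (nth false t)) (leaf_bit x).
rewrite -(card_imset _ (f := leaf_word)); last first.
  move=> x y eq_word; apply: leaf_bit_inj => i; rewrite def_n => lti.
  have := congr1 (fun w : word n.+1 => w (sigma (inord i))) eq_word.
  by rewrite !cycle_wordE inordK // => /eqP; rewrite sided_letter_inj => /eqP.
apply/subset_leq_card/subsetP => _ /imsetP [x no_conflict ->].
by apply: sided_word_in_component; apply: leaf_compatible_pattern.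
Qed.

Lemma antipodal_word_in_preimage t :
  antipodal_word t \in shape_preimage sigma (shape sigma (base_word t)).
Proof.
rewrite inE; apply/eqP/eq_shape_cycle_word => i _.
by rewrite !Rdag_sided andbF andbT; case: (cycle_side _ i); case: (cycle_side _ _).
Qed.

Lemma antipodal_word_neq t y : antipodal_word t y != base_word t y.
Proof.
have [z ->] : exists z, y = sigma z by exists ((sigma^-1)%g y); rewrite permKV.
by rewrite /base_word /sided_word !cycle_wordE eq_sym sided_letter_side_neq.
Qed.

End ShapeFamily.

Local Open Scope ring_scope.

Lemma expr_golden_roots (R : comRingType) (x y : R) :
  x ^+ 2 = x + 1 -> y ^+ 2 = y + 1 -> x + y = 1 ->
  forall n, x ^+ n + y ^+ n = (lucas n)%:R.
Proof.
move=> x2 y2 sum_xy n.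
have exprSS (z : R) m : z ^+ 2 = z + 1 -> z ^+ m.+2 = z ^+ m.+1 + z ^+ m.
  by move=> z2; rewrite -addn2 exprD z2 mulrDr mulr1 exprSr.
suff /(_ n) [] : forall m, x ^+ m + y ^+ m = (lucas m)%:R /\
                           x ^+ m.+1 + y ^+ m.+1 = (lucas m.+1)%:R by [].
elim=> [|m [IHm IHm1]]; first by rewrite !expr0 !expr1 sum_xy -mulr2n.
split=> [//|]; rewrite (exprSS x) // (exprSS y) // lucasSS natrD -IHm -IHm1.
exact: addrACA.
Qed.

Lemma mu_lucas (R : rcfType) n : mu_plus R ^+ n + mu_minus R ^+ n = (lucas n)%:R.
Proof.
have sqr_half (e : R) : ((1 + e) / 2) ^+ 2 = (1 + e) / 2 + 1 + (e ^+ 2 - 5) / 4.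
  by field.
have sqrt5 : Num.sqrt (5 : R) ^+ 2 - 5 = 0 by rewrite sqr_sqrtr ?ler0n ?subrr.
rewrite /mu_plus /mu_minus; apply: expr_golden_roots; [| |by field];
  by rewrite sqr_half ?sqrrN sqrt5 mul0r addr0.
Qed.

Theorem theorem2 (R : rcfType) (n : nat) (sigma : {perm 'I_n}) :
  (0 < n)%N ->
  exists Ss : {set {set {set 'I_n}}},
    (Num.sqrt (2 : R)) ^+ n.-1 <= (#|Ss|%:R : R) /\
    forall S, S \in Ss ->
      [/\ is_shape sigma S,
          (exists v, v \in shape_preimage sigma S /\
             (mu_plus R) ^+ n + (mu_minus R) ^+ n
               <= (#|component (shape_preimage sigma S) v|%:R : R))
        & (exists v v', [/\ v \in shape_preimage sigma S, v' \in shape_preimage sigma S &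
             forall i, v i != v' i])].
Proof.
case: n sigma => [//|n] sigma _.
exists [set shape sigma (base_word sigma t) | t : (n.+1)./2.-tuple bool].
split=> [|_ /imsetP [t _ ->]]; first exact: card_shape_family.
split.
- by apply/existsP; exists (base_word sigma t).
- exists (base_word sigma t); split; first by rewrite inE.
  by rewrite mu_lucas ler_nat lucas_le_card_component.
- exists (base_word sigma t), (antipodal_word sigma t); split.
  + by rewrite inE.
  + exact: antipodal_word_in_preimage.
  + by move=> y; rewrite eq_sym antipodal_word_neq.
Qed.
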